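(* Suppose the PL condition, KKT regularity, and projected-gradient injectivity (below) hold for all $t=1,\dots,T$, with noiseless observations. If there exists $\bar{\boldsymbol{\theta}}\in\Theta$ such that $\ell_t(\bar{\boldsymbol{\theta}})=0$ for all $t=1,\dots,T$, then $\boldsymbol{\theta}_t=\bar{\boldsymbol{\theta}}$ for all $t$.
   Context: Setting: for periods $t=1,\dots,T$, data $\mathbf{B}_t\in\mathbb{R}^{k\times n}$, $\mathbf{q}_t\in\mathbb{R}^k_{+}$ define $\mathcal{X}_t=\{\mathbf{x}\in\mathbb{R}^n_+:\mathbf{B}_t\mathbf{x}\le\mathbf{q}_t\}$. $\Theta\subset\mathbb{R}^p$ is a parameter set, $c_t:\mathbb{R}^n\times\Theta\to\mathbb{R}$ is differentiable in $\mathbf{x}$, and allocations $\mathbf{x}_t\in\mathbb{R}^n_+$ are observed. $\mathrm{P}_t:=I-\mathbf{B}_t^\top(\mathbf{B}_t\mathbf{B}_t^\top)^\dagger\mathbf{B}_t$. The inverse loss is $$\ell_t(\boldsymbol{\theta}) := \|(\mathbf{B}_t\mathbf{x}_t-\mathbf{q}_t)_+\|^2+\inf_{\boldsymbol{\lambda}_t\ge 0}\|\nabla_{\mathbf{x}}c_t(\mathbf{x}_t;\boldsymbol{\theta})+\mathbf{B}_t^\top\boldsymbol{\lambda}_t\|^2+|\boldsymbol{\lambda}_t^\top(\mathbf{B}_t\mathbf{x}_t-\mathbf{q}_t)|,$$ with $\boldsymbol{\lambda}_t\ge0$ the multiplier appearing in the dual feasibility term. PL condition: there is $\mu>0$ with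 $\frac{1}{2\mu}\|\nabla_{\mathbf{x}}c_t(\mathbf{x};\boldsymbol{\theta})\|^2\ge c_t(\mathbf{x};\boldsymbol{\theta})-\min_{\mathbf{y}\in\mathcal{X}_t}c_t(\mathbf{y};\boldsymbol{\theta})$ for all $t$, $\boldsymbol{\theta}\in\Theta$, $\mathbf{x}\in\mathbb{R}^n_+$. KKT regularity: for each $t$ there exist a latent parameter $\boldsymbol{\theta}_t\in\Theta$ and $\boldsymbol{\lambda}_t\in\mathbb{R}^k_+$ with $\nabla_{\mathbf{x}}c_t(\mathbf{x}_t;\boldsymbol{\theta}_t)+\mathbf{B}_t^\top\boldsymbol{\lambda}_t=\mathbf{0}$, $\mathbf{B}_t\mathbf{x}_t\le\mathbf{q}_t$, $\boldsymbol{\lambda}_t^\top(\mathbf{B}_t\mathbf{x}_t-\mathbf{q}_t)=0$. Projected-gradient injectivity: for each $t$, $\boldsymbol{\theta}\mapsto\mathrm{P}_t\nabla_{\mathbf{x}}c_t(\mathbf{x}_t;\boldsymbol{\theta})$ is injective on $\Theta$. *)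

From HB Require Import structures.
From mathcomp Require Import all_boot all_order all_algebra.
From mathcomp Require Import all_classical all_reals all_analysis.
Set Implicit Arguments. Unset Strict Implicit. Unset Printing Implicit Defensive.
Import Order.TTheory GRing.Theory Num.Theory.
Import numFieldNormedType.Exports.
Local Open Scope classical_set_scope.
Local Open Scope ring_scope.

Section Defs.
Variable R : realType.

Definition vnonneg m (v : 'cV[R]_m) : Prop := forall i, 0 <= v i 0.
Definition vle m (v w : 'cV[R]_m) : Prop := forall i, v i 0 <= w i 0.

Definition sqnorm m (v : 'cV[R]_m) : R := \sum_(i < m) (v i 0) ^+ 2.

Definition pospart m (v : 'cV[R]_m) : 'cV[R]_m := map_mx (fun a => Num.max a 0) v.

Definition penrose m n (A : 'M[R]_(m, n)) (X : 'M[R]_(n, m)) : Prop :=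
  [/\ A *m X *m A = A, X *m A *m X = X, (A *m X)^T = A *m X & (X *m A)^T = X *m A].
Definition mpinv m n (A : 'M[R]_(m, n)) : 'M[R]_(n, m) := xget 0 (penrose A).

Definition projP k n (B : 'M[R]_(k, n)) : 'M[R]_n :=
  1%:M - B^T *m mpinv (B *m B^T) *m B.

Definition grad n (f : 'cV[R]_n -> R) (x : 'cV[R]_n) : 'cV[R]_n :=
  \col_(i < n) ('D_(delta_mx i 0) f x).

Definition feas k n (B : 'M[R]_(k, n)) (q : 'cV[R]_k) : set 'cV[R]_n :=
  [set y | vnonneg y /\ vle (B *m y) q].

(* inverse loss ell(theta), with g = grad_x c(x; theta) *)
Definition inv_loss k n (B : 'M[R]_(k, n)) (q : 'cV[R]_k) (x g : 'cV[R]_n) : R :=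
  sqnorm (pospart (B *m x - q)) +
  inf [set sqnorm (g + B^T *m l) + `|(l^T *m (B *m x - q)) 0 0|
      | l in [set l : 'cV[R]_k | vnonneg l]].

End Defs.

From HB Require Import structures.
From mathcomp Require Import all_boot all_order all_algebra.
From mathcomp Require Import all_classical all_reals all_analysis.
From mathcomp Require Import lra.
Import Order.TTheory GRing.Theory Num.Theory.
Import numFieldNormedType.Exports.
Local Open Scope classical_set_scope.
Local Open Scope ring_scope.

(* KKT regularity makes the gradient at the latent parameter theta_t a combination
   B_t^T lam_t of the constraint rows, and P_t annihilates the row space of B_t, so
   P_t grad c_t(x_t; theta_t) = 0.  A vanishing loss at thbar makes the dual residual
   grad c_t(x_t; thbar) + B_t^T l arbitrarily small for suitable l >= 0; applying P_t
   kills the B_t^T l part, so P_t grad c_t(x_t; thbar) is arbitrarily small, i.e. 0.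
   Projected-gradient injectivity then gives theta_t = thbar. *)

Lemma mulmx_trmx_eq0 {F : realDomainType} {m n} {M : 'M[F]_(m, n)} :
  M *m M^T = 0 -> M = 0.
Proof.
move=> MMT0; apply/matrixP => i j.
have := congr1 (fun A : 'M[F]_m => A i i) MMT0; rewrite !mxE.
under eq_bigr do rewrite mxE.
move=> /psumr_eq0P => /(_ (fun j _ => sqr_ge0 (M i j)) j isT) /eqP.
by rewrite mulf_eq0 orbb => /eqP.
Qed.

Lemma row_free_gram_unitmx {F : realFieldType} {r n} {G : 'M[F]_(r, n)} :
  row_free G -> G *m G^T \in unitmx.
Proof.
move=> freeG; rewrite -row_free_unit -kermx_eq0.
set K := kermx _.
have KGGT0 : K *m (G *m G^T) = 0 := mulmx_ker _.
have : (K *m G) *m (K *m G)^T = 0.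
  by rewrite trmx_mul !mulmxA -(mulmxA K G) KGGT0 mul0mx.
by move/mulmx_trmx_eq0/eqP; rewrite mulmx_free_eq0.
Qed.

Section PseudoInverse.
Context {R : realType}.

Lemma penrose_full_rank_factor {m r n} {F : 'M[R]_(m, r)} {G : 'M[R]_(r, n)} :
  row_free G -> row_free F^T ->
  penrose (F *m G) (G^T *m invmx (G *m G^T) *m invmx (F^T *m F) *m F^T).
Proof.
move=> freeG freeFT.
have uG := row_free_gram_unitmx freeG.
have uF : F^T *m F \in unitmx by have := row_free_gram_unitmx freeFT; rewrite trmxK.
set U := invmx (G *m G^T); set V := invmx (F^T *m F).
have UT : U^T = U by rewrite /U trmx_inv trmx_mul trmxK.
have VT : V^T = V by rewrite /V trmx_inv trmx_mul trmxK.
have GU : G *m G^T *m U = 1%:M by rewrite /U mulmxV.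
have VF : V *m (F^T *m F) = 1%:M by rewrite /V mulVmx.
have AX : F *m G *m (G^T *m U *m V *m F^T) = F *m V *m F^T.
  by rewrite !mulmxA -(mulmxA F G) -(mulmxA F (G *m G^T)) GU mulmx1.
have XA : (G^T *m U *m V *m F^T) *m (F *m G) = G^T *m U *m G.
  by rewrite !mulmxA -(mulmxA _ V F^T) -(mulmxA _ (V *m F^T)) -(mulmxA V) VF mulmx1.
split.
- by rewrite AX !mulmxA -(mulmxA _ V) -(mulmxA _ (V *m F^T)) -(mulmxA V) VF mulmx1.
- by rewrite XA -!mulmxA (mulmxA G) (mulmxA (G *m G^T)) GU mul1mx !mulmxA.
- by rewrite AX !trmx_mul trmxK VT mulmxA.
- by rewrite XA !trmx_mul trmxK UT mulmxA.
Qed.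

Lemma penrose_exists {m n} (A : 'M[R]_(m, n)) : exists X, penrose A X.
Proof.
have freeCT : row_free (col_base A)^T.
  by rewrite /row_free mxrank_tr; apply: col_base_full.
have := penrose_full_rank_factor (row_base_free A) freeCT.
by rewrite mulmx_base => pA; eexists; exact: pA.
Qed.

Lemma mpinvP {m n} (A : 'M[R]_(m, n)) : penrose A (mpinv A).
Proof. by have [X pX] := penrose_exists A; apply: (xgetPex 0 (ex_intro _ X pX)). Qed.

(* E := 1 - Y (B B^T) is symmetric with (B B^T) E = 0, so (E B)(E B)^T = E (B B^T) E = 0,
   i.e. E B = 0; transposing gives the claim. *)
Lemma penrose_gram_trmx {k n} {B : 'M[R]_(k, n)} {Y : 'M[R]_k} :
  penrose (B *m B^T) Y -> B^T *m Y *m (B *m B^T) = B^T.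
Proof.
case=> AYA _ _ YAsym.
set E := 1%:M - Y *m (B *m B^T).
have AE : B *m B^T *m E = 0 by rewrite /E mulmxBr mulmx1 (mulmxA (B *m B^T) Y) AYA subrr.
have ET : E^T = E by rewrite /E linearB /= trmx1 YAsym.
have EB0 : E^T *m B = 0.
  apply: mulmx_trmx_eq0; rewrite trmx_mul trmxK mulmxA -(mulmxA _ B) -mulmxA ET.
  by rewrite AE mulmx0.
have : (E^T *m B)^T = 0 by rewrite EB0 trmx0.
rewrite trmx_mul trmxK /E mulmxBr mulmx1 => /eqP; rewrite subr_eq0 eq_sym => /eqP.
by rewrite !mulmxA.
Qed.

Lemma projP_trmx {k n} (B : 'M[R]_(k, n)) : projP B *m B^T = 0.
Proof.
by rewrite /projP mulmxBl mul1mx -(mulmxA _ B) (penrose_gram_trmx (mpinvP _)) subrr.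
Qed.

Lemma projP_mulmx_addtr {k n} (B : 'M[R]_(k, n)) (g : 'cV[R]_n) (l : 'cV[R]_k) :
  projP B *m (g + B^T *m l) = projP B *m g.
Proof. by rewrite mulmxDr mulmxA projP_trmx mul0mx addr0. Qed.

End PseudoInverse.

Section SmallVectors.
Context {R : realType}.

Lemma sqnorm_ge0 {n} (v : 'cV[R]_n) : 0 <= sqnorm v.
Proof. by apply: sumr_ge0 => i _; apply: sqr_ge0. Qed.

Lemma normr_le_of_sqnorm_lt {n} {v : 'cV[R]_n} {d : R} (i : 'I_n) :
  0 <= d -> sqnorm v < d ^+ 2 -> `|v i 0| <= d.
Proof.
move=> d0 vd.
have vi : v i 0 ^+ 2 < d ^+ 2.
  apply: le_lt_trans vd; rewrite /sqnorm (bigD1 i) //= lerDl.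
  by apply: sumr_ge0 => j _; apply: sqr_ge0.
by apply: ltW; rewrite -(ltr_pXn2r (_ : 0 < 2)%N) ?nnegrE // real_normK ?num_real.
Qed.

Lemma normr_mulmx_le {m n} (A : 'M[R]_(m, n)) {v : 'cV[R]_n} {d : R} (i : 'I_m) :
  (forall j, `|v j 0| <= d) -> `|(A *m v) i 0| <= (\sum_j `|A i j|) * d.
Proof.
move=> vd; rewrite mxE mulr_suml.
apply: le_trans (ler_norm_sum _ _ _) _.
by apply: ler_sum => j _; rewrite normrM ler_wpM2l.
Qed.

Lemma small_preimage_eq0 {m n} (A : 'M[R]_(m, n)) (w : 'cV[R]_m) :
  (forall eps, 0 < eps -> exists2 v, sqnorm v < eps & A *m v = w) -> w = 0.
Proof.
move=> small; apply/matrixP => i j; rewrite ord1 [RHS]mxE.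
apply/eqP/negPn/negP => wi0.
have wpos : 0 < `|w i 0| by rewrite normr_gt0.
set M := \sum_j `|A i j|.
have M0 : 0 <= M by apply: sumr_ge0 => j' _.
set d := `|w i 0| / (2 * (M + 1)).
have d0 : 0 < d by rewrite divr_gt0 // mulr_gt0 // ltr_wpDl.
have dM : d * (2 * (M + 1)) = `|w i 0| by rewrite mulfVK // gt_eqF // mulr_gt0 // ltr_wpDl.
have [v vd Avw] := small (d ^+ 2) (exprn_gt0 2 d0).
have := normr_mulmx_le A i (fun j => normr_le_of_sqnorm_lt j (ltW d0) vd).
rewrite Avw -/M; nra.
Qed.

End SmallVectors.

Lemma inv_loss_eq0_dual_residual_small {R : realType} {k n} {B : 'M[R]_(k, n)}
  {q : 'cV[R]_k} {x g : 'cV[R]_n} :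
  inv_loss B q x g = 0 ->
  forall eps, 0 < eps -> exists2 l, vnonneg l & sqnorm (g + B^T *m l) < eps.
Proof.
rewrite /inv_loss; set S := [set _ | _ in _] => loss0 eps eps0.
have S0 : S (sqnorm (g + B^T *m 0) + `|((0 : 'cV[R]_k)^T *m (B *m x - q)) 0 0|).
  by exists 0 => // i; rewrite mxE.
have Slb : lbound S 0 by move=> e [l _ <-]; rewrite addr_ge0 ?sqnorm_ge0.
have infS0 : inf S = 0.
  have := lb_le_inf (ex_intro _ _ S0) Slb.
  have := sqnorm_ge0 (pospart (B *m x - q)); lra.
have [e [l l0 <-]] := inf_adherent eps0 (conj (ex_intro _ _ S0) (ex_intro _ 0 Slb)).
rewrite infS0 add0r => residual_lt; exists l => //.
by apply: le_lt_trans residual_lt; rewrite lerDl.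
Qed.

Lemma projP_mulmx_eq0_of_inv_loss_eq0 {R : realType} {k n} {B : 'M[R]_(k, n)}
  {q : 'cV[R]_k} {x g : 'cV[R]_n} :
  inv_loss B q x g = 0 -> projP B *m g = 0.
Proof.
move=> loss0; apply: (@small_preimage_eq0 _ _ _ (projP B)) => eps eps0.
have [l _ small] := inv_loss_eq0_dual_residual_small loss0 _ eps0.
by exists (g + B^T *m l) => //; apply: projP_mulmx_addtr.
Qed.

Theorem proposition1 (R : realType) (T n k p : nat)
  (B : 'I_T -> 'M[R]_(k, n)) (q : 'I_T -> 'cV[R]_k)
  (Theta : set 'cV[R]_p)
  (c : 'I_T -> 'cV[R]_n -> 'cV[R]_p -> R)
  (x : 'I_T -> 'cV[R]_n)
  (theta : 'I_T -> 'cV[R]_p) (lam : 'I_T -> 'cV[R]_k)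
  (hq : forall t, vnonneg (q t))
  (hx : forall t, vnonneg (x t))
  (hdiff : forall t th, Theta th -> forall y, differentiable (fun z => c t z th) y)
  (* PL condition *)
  (hPL : exists2 mu : R, 0 < mu &
     forall t th, Theta th -> forall y, vnonneg y ->
       exists2 y0, feas (B t) (q t) y0 /\
                   (forall z, feas (B t) (q t) z -> c t y0 th <= c t z th) &
       (2 * mu)^-1 * sqnorm (grad (fun z => c t z th) y) >= c t y th - c t y0 th)
  (* KKT regularity *)
  (hKKT : forall t, [/\ Theta (theta t), vnonneg (lam t),
     grad (fun z => c t z (theta t)) (x t) + (B t)^T *m lam t = 0,
     vle (B t *m x t) (q t) &
     ((lam t)^T *m (B t *m x t - q t)) 0 0 = 0])
  (* projected-gradient injectivity *)
  (hinj : forall t th1 th2, Theta th1 -> Theta th2 ->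
     projP (B t) *m grad (fun z => c t z th1) (x t) =
     projP (B t) *m grad (fun z => c t z th2) (x t) -> th1 = th2)
  (thbar : 'cV[R]_p) (hthbar : Theta thbar)
  (hloss : forall t, inv_loss (B t) (q t) (x t) (grad (fun z => c t z thbar) (x t)) = 0) :
  forall t, theta t = thbar.
Proof.
move=> t; have [theta_t _ stationary _ _] := hKKT t.
apply: (hinj t _ _ theta_t hthbar).
rewrite (projP_mulmx_eq0_of_inv_loss_eq0 (hloss t)).
by rewrite -(projP_mulmx_addtr _ _ (lam t)) stationary mulmx0.
Qed.
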